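(* Let $|\psi\rangle\in\mathcal{H}$ be a normalized pure state and $\mathcal{N}=\{\mathcal{N}_k\}$ a non-trivial neighborhood structure. Suppose there exists a Hermitian operator of the form $\mathbb{W}=\sum_k\mathbb{W}_{\mathcal{N}_k}\otimes I_{\overline{\mathcal{N}}_k}$ (each $\mathbb{W}_{\mathcal{N}_k}$ acting on $\bigotimes_{a\in\mathcal{N}_k}\mathcal{H}_a$) such that $\langle\psi|\mathbb{W}|\psi\rangle<\langle\phi|\mathbb{W}|\phi\rangle$ for every normalized $|\phi\rangle\in\mathcal{H}_{\mathcal{N}}(|\psi\rangle)$ with $|\phi\rangle\langle\phi|\neq|\psi\rangle\langle\psi|$. Then $|\psi\rangle$ is UDA relative to $\mathcal{N}$.
   Context: $\mathcal{H}=\bigotimes_{a=1}^N\mathcal{H}_a$ is a finite-dimensional multipartite Hilbert space; $\mathcal{D}(\mathcal{H})$ is the set of density operators. A neighborhood is $\mathcal{N}_k\subsetneq\{1,\dots,N\}$, with complement $\overline{\mathcal{N}}_k$; a neighborhood structure is a finite collection of neighborhoods, non-trivial if every index lies in some neighborhood and each neighborhood intersects another. For a state $\rho$, $\rho_{\mathcal{N}_k}=\mathrm{tr}_{\overline{\mathcal{N}}_k}\rho$. The DQLS subspace of $|\psi\rangle$ is $\mathcal{H}_{\mathcal{N}}(|\psi\rangle)=\bigcap_k\mathrm{supp}(\rho_{\mathcal{N}_k}\otimes I_{\overline{\mathcal{N}}_k})$ with $\rho=|\psi\rangle\langle\psi|$. A state $\rho$ is UDA (uniquely determined among all states) relative to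 $\mathcal{N}$ if no $\sigma\in\mathcal{D}(\mathcal{H})$ with $\sigma\ne\rho$ has $\sigma_{\mathcal{N}_k}=\rho_{\mathcal{N}_k}$ for all $\mathcal{N}_k\in\mathcal{N}$. *)

From HB Require Import structures.
From mathcomp Require Import all_boot all_order all_algebra all_field.

Set Implicit Arguments.
Unset Strict Implicit.
Unset Printing Implicit Defensive.

Import Order.TTheory GRing.Theory Num.Theory.
Local Open Scope ring_scope.

(* Parties are indexed by 'I_N; party a has Hilbert space H_a = C^{(d a).+1}.
   A basis vector of H = ⊗_a H_a is a configuration x : cfg d. *)
Definition cfg (N : nat) (d : 'I_N -> nat) := {dffun forall a : 'I_N, 'I_(d a).+1}.

(* Basis of the subsystem ⊗_{a ∈ S} H_a: configurations which are 0 outside S. *)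
Definition supported (N : nat) (d : 'I_N -> nat) (S : {set 'I_N}) (u : cfg d) : bool :=
  [forall a, (a \notin S) ==> (u a == ord0)].

Definition cfgS (N : nat) (d : 'I_N -> nat) (S : {set 'I_N}) :=
  {u : cfg d | supported S u}.

Definition op (I : finType) := I -> I -> algC.
Definition vec (I : finType) := I -> algC.

Definition rst_fun (N : nat) (d : 'I_N -> nat) (S : {set 'I_N}) (x : cfg d) : cfg d :=
  @finfun _ (fun a => 'I_(d a).+1) (fun a => if a \in S then x a else ord0).

Lemma rst_proof (N : nat) (d : 'I_N -> nat) (S : {set 'I_N}) (x : cfg d) :
  supported S (rst_fun S x).
Proof.
apply/forallP => a; apply/implyP => Ha.
by rewrite /rst_fun ffunE (negbTE Ha).
Qed.

Arguments rst_fun {N d} S x.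
Definition rst (N : nat) (d : 'I_N -> nat) (S : {set 'I_N}) (x : cfg d) : cfgS d S :=
  exist _ (rst_fun S x) (rst_proof S x).

Arguments rst {N d} S x.

(* u ⊗ w, with u a basis vector of H_S and w one of H_{complement of S} *)
Definition join (N : nat) (d : 'I_N -> nat) (S : {set 'I_N})
  (u : cfgS d S) (w : cfgS d (~: S)) : cfg d :=
  @finfun _ (fun a => 'I_(d a).+1) (fun a => if a \in S then val u a else val w a).

Definition ptrace (N : nat) (d : 'I_N -> nat) (S : {set 'I_N}) (rho : op (cfg d))
  : op (cfgS d S) :=
  fun u v => \sum_(w : cfgS d (~: S)) rho (join u w) (join v w).

Arguments ptrace {N d} S rho _ _.

Definition tensI (N : nat) (d : 'I_N -> nat) (S : {set 'I_N}) (B : op (cfgS d S))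
  : op (cfg d) :=
  fun x y => if rst (~: S) x == rst (~: S) y then B (rst S x) (rst S y) else 0.

Definition apply_op (I : finType) (A : op I) (v : vec I) : vec I :=
  fun x => \sum_y A x y * v y.

Definition supp_op (I : finType) (A : op I) (v : vec I) : Prop :=
  exists u : vec I, v = apply_op A u.

Definition proj_op (I : finType) (psi : vec I) : op I :=
  fun x y => psi x * (psi y)^*.

Definition normalized_vec (I : finType) (psi : vec I) : Prop :=
  \sum_x psi x * (psi x)^* = 1.

Definition herm_op (I : finType) (A : op I) : Prop :=
  forall x y, A y x = (A x y)^*.

Definition psd_op (I : finType) (A : op I) : Prop :=
  forall v : vec I, 0 <= \sum_x \sum_y (v x)^* * A x y * v y.

Definition density_op (I : finType) (A : op I) : Prop :=
  herm_op A /\ psd_op A /\ \sum_x A x x = 1.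

Definition expect_op (I : finType) (A : op I) (psi : vec I) : algC :=
  \sum_x \sum_y (psi x)^* * A x y * psi y.

Definition nontrivial_nbhd (N K : nat) (nb : 'I_K -> {set 'I_N}) : Prop :=
  (forall k, nb k \proper [set: 'I_N]) /\
  (forall a : 'I_N, exists k, a \in nb k) /\
  (forall k, exists k', k' != k /\ nb k :&: nb k' != set0).

Definition DQLS (N : nat) (d : 'I_N -> nat) (K : nat) (nb : 'I_K -> {set 'I_N})
  (psi : vec (cfg d)) (phi : vec (cfg d)) : Prop :=
  forall k, supp_op (tensI (ptrace (nb k) (proj_op psi))) phi.

Definition UDA (N : nat) (d : 'I_N -> nat) (K : nat) (nb : 'I_K -> {set 'I_N})
  (rho : op (cfg d)) : Prop :=
  forall sigma : op (cfg d), density_op sigma ->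
    (forall k, ptrace (nb k) sigma = ptrace (nb k) rho) -> sigma = rho.

Definition Wsum (N : nat) (d : 'I_N -> nat) (K : nat) (nb : 'I_K -> {set 'I_N})
  (Wk : forall k : 'I_K, op (cfgS d (nb k))) : op (cfg d) :=
  fun x y => \sum_(k < K) tensI (Wk k) x y.

(* A state sigma with the marginals of |psi><psi| is a sum of rank-one terms
   |c_i><c_i| (Cholesky), and each c_i lies in the DQLS subspace, since the
   support of sigma is contained in that of every sigma_{N_k} (x) I.  As W is a
   sum of local terms, tr(W sigma) only depends on the marginals, so it equals
   <psi|W|psi>.  The variational hypothesis gives
   <c_i|W|c_i> >= <psi|W|psi> |c_i|^2, with equality only when |c_i><c_i| is a
   multiple of |psi><psi|; summing over i, all these inequalities are
   equalities, hence sigma = tr(sigma) |psi><psi| = |psi><psi|. *)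

From HB Require Import structures.
From mathcomp Require Import all_boot all_order all_algebra all_field.
From mathcomp Require Import ring.
From Stdlib Require Import FunctionalExtensionality Classical.
Import Order.TTheory GRing.Theory Num.Theory.
Local Open Scope ring_scope.
Set Implicit Arguments.
Unset Strict Implicit.
Unset Printing Implicit Defensive.

Lemma sum_if_eq (T : finType) (j : T) (F : T -> algC) :
  \sum_i (if i == j then F i else 0) = F j.
Proof. by rewrite -big_mkcond big_pred1_eq. Qed.

Section Operators.
Variable I : finType.
Implicit Types (A B : op I) (u v w z : vec I) (x y : I).

Definition form A v w : algC := \sum_x \sum_y (v x)^* * A x y * w y.
Definition dotv v w : algC := \sum_x (v x)^* * w x.
Definition trace A : algC := \sum_x A x x.
Definition tr_mul A B : algC := \sum_x \sum_y A x y * B y x.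
Definition unit_vec x : vec I := fun a => (a == x)%:R.
Definition outer n (c : 'I_n -> vec I) : op I := fun x y => \sum_i proj_op (c i) x y.

Lemma op_ext A B : (forall x y, A x y = B x y) -> A = B.
Proof. by move=> AB; do 2![apply: functional_extensionality => ?]; apply: AB. Qed.

Lemma sum_unit_vec x (F : I -> algC) : \sum_a (a == x)%:R * F a = F x.
Proof. by rewrite -[RHS](sum_if_eq x); apply: eq_bigr => a _; case: eqP; rewrite ?mul1r ?mul0r. Qed.

Lemma formDl A u v w : form A (fun a => u a + v a) w = form A u w + form A v w.
Proof.
rewrite /form -big_split; apply: eq_bigr => x _.
by rewrite -big_split; apply: eq_bigr => y _; rewrite rmorphD !mulrDl.
Qed.

Lemma formDr A u v w : form A u (fun a => v a + w a) = form A u v + form A u w.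
Proof.
rewrite /form -big_split; apply: eq_bigr => x _.
by rewrite -big_split; apply: eq_bigr => y _; rewrite mulrDr.
Qed.

Lemma formZl A t v w : form A (fun a => t * v a) w = t^* * form A v w.
Proof.
rewrite /form mulr_sumr; apply: eq_bigr => x _; rewrite mulr_sumr.
by apply: eq_bigr => y _; rewrite rmorphM !mulrA.
Qed.

Lemma formZr A t v w : form A v (fun a => t * w a) = t * form A v w.
Proof.
rewrite /form mulr_sumr; apply: eq_bigr => x _; rewrite mulr_sumr.
by apply: eq_bigr => y _; rewrite mulrCA.
Qed.

Lemma form_unit_vecl A x w : form A (unit_vec x) w = \sum_y A x y * w y.
Proof.
rewrite /form -(sum_unit_vec x (fun a => \sum_y A a y * w y)).
by apply: eq_bigr => a _; rewrite rmorph_nat mulr_sumr; apply: eq_bigr => y _; rewrite mulrA.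
Qed.

Lemma form_unit_vec A x y : form A (unit_vec x) (unit_vec y) = A x y.
Proof.
rewrite form_unit_vecl -[RHS](sum_unit_vec y (A x)).
by apply: eq_bigr => b _; rewrite mulrC.
Qed.

Lemma herm_form A v w : herm_op A -> (form A v w)^* = form A w v.
Proof.
move=> hA; rewrite /form rmorph_sum exchange_big; apply: eq_bigr => y _.
rewrite rmorph_sum; apply: eq_bigr => x _.
by rewrite !rmorphM /= conjCK -hA; ring.
Qed.

Lemma psd_diag_ge0 A x : psd_op A -> 0 <= A x x.
Proof. by move=> pA; have := pA (unit_vec x); rewrite -/(form _ _ _) form_unit_vec. Qed.

Lemma psd_offdiag_eq0 A x y : herm_op A -> psd_op A ->
  A x x = 0 -> A y y = 0 -> A x y = 0.
Proof.
move=> hA pA Axx Ayy.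
have := pA (fun a => - A x y * unit_vec x a + unit_vec y a).
rewrite -/(form _ _ _) formDl !formDr !formZl !formZr !form_unit_vec Axx Ayy.
rewrite (hA x y) !mulr0 add0r addr0 rmorphN /= !mulNr -opprD.
rewrite [_^* * _]mulrC -mulr2n oppr_ge0 pmulrn_lle0 // => le0.
by apply/eqP; rewrite -mul_conjC_eq0 eq_le le0 mul_conjC_ge0.
Qed.

Lemma outer_cons n (c : 'I_n -> vec I) v x y :
  outer (fun i : 'I_n.+1 => if unlift ord0 i is Some j then c j else v) x y
  = proj_op v x y + outer c x y.
Proof.
by rewrite /outer big_ord_recl unlift_none; congr (_ + _); apply: eq_bigr => i _; rewrite liftK.
Qed.

Definition schur_col A x : vec I := fun a => A a x / sqrtC (A x x).
Definition schur A x : op I := fun a b => A a b - proj_op (schur_col A x) a b.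

Section SchurComplement.
Variables (A : op I) (x : I).
Hypotheses (hA : herm_op A) (Axx_gt0 : 0 < A x x).

Let r := sqrtC (A x x).
Let r_neq0 : r != 0. Proof. by rewrite gt_eqF // sqrtC_gt0. Qed.
Let r_real : r^* = r. Proof. by apply/CrealP; rewrite gtr0_real // sqrtC_gt0. Qed.
Let Axx_real : (A x x)^* = A x x. Proof. by apply/CrealP; rewrite gtr0_real. Qed.
Let rr : r * r = A x x. Proof. by rewrite -expr2 sqrtCK. Qed.

Lemma herm_schur : herm_op (schur A x).
Proof.
move=> a b; rewrite /schur /schur_col -/r /proj_op rmorphB /= !rmorphM /= conjCK.
by rewrite !fmorphV /= !r_real -(hA a b); congr (_ - _); ring.
Qed.

Lemma schur_diag : schur A x x x = 0.
Proof.
rewrite /schur /schur_col -/r /proj_op rmorphM /= fmorphV /= r_real -(hA x x) -rr.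
by apply/eqP; rewrite subr_eq0; apply/eqP; field.
Qed.

Lemma psd_schur : psd_op A -> psd_op (schur A x).
Proof.
move=> pA v; rewrite -/(form _ _ _).
have form_schur : form (schur A x) v v =
    form A v v - (dotv (schur_col A x) v)^* * dotv (schur_col A x) v.
  rewrite /form /dotv rmorph_sum /= mulr_suml -sumrB; apply: eq_bigr => a _.
  rewrite mulr_sumr -sumrB; apply: eq_bigr => b _.
  by rewrite /schur /schur_col /proj_op !rmorphM /= !conjCK; ring.
set beta := form A (unit_vec x) v.
have dot_col : dotv (schur_col A x) v = beta / r.
  rewrite /beta form_unit_vecl /dotv mulr_suml; apply: eq_bigr => b _.
  by rewrite /schur_col -/r rmorphM /= -hA fmorphV /= r_real mulrAC.
set k := - (beta / A x x).
suff -> : form (schur A x) v v =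
    form A (fun a => v a + k * unit_vec x a) (fun a => v a + k * unit_vec x a).
  exact: pA.
rewrite form_schur dot_col formDl !formDr !formZl !formZr form_unit_vec.
rewrite -(herm_form (unit_vec x) v hA) -/beta.
rewrite rmorphM /= fmorphV /= r_real /k rmorphN rmorphM fmorphV /= Axx_real -rr.
by field.
Qed.

End SchurComplement.

Lemma psd_outer_on (l : seq I) A : herm_op A -> psd_op A ->
  (forall x, x \notin l -> A x x = 0) -> exists n (c : 'I_n -> vec I), A = outer c.
Proof.
elim: l A => [|x l IH] A hA pA diag0.
  exists 0, (fun=> fun=> 0); apply: op_ext => a b; rewrite /outer big_ord0.
  exact: psd_offdiag_eq0 hA pA (diag0 _ _) (diag0 _ _).
have [Axx0|Axx_neq0] := eqVneq (A x x) 0.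
  apply: IH => // y yl; case: (eqVneq y x) => [->//|ne].
  by apply: diag0; rewrite inE negb_or ne.
have Axx_gt0 : 0 < A x x by rewrite lt_def Axx_neq0 psd_diag_ge0.
have [|n [c Sc]] := IH (schur A x) (herm_schur hA Axx_gt0) (psd_schur hA Axx_gt0 pA).
  move=> y yl; case: (eqVneq y x) => [->|ne]; first exact: schur_diag.
  have Ayy0 : A y y = 0 by apply: diag0; rewrite inE negb_or ne.
  apply/eqP; rewrite eq_le (psd_diag_ge0 _ (psd_schur hA Axx_gt0 pA)) andbT.
  by rewrite /schur Ayy0 sub0r oppr_le0 mul_conjC_ge0.
exists n.+1, (fun i => if unlift ord0 i is Some j then c j else schur_col A x).
apply: op_ext => a b; rewrite outer_cons -Sc /schur.
by rewrite addrC subrK.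
Qed.

Lemma psd_outer A : herm_op A -> psd_op A -> exists n (c : 'I_n -> vec I), A = outer c.
Proof. by move=> hA pA; apply: (@psd_outer_on (enum I)) => // x; rewrite mem_enum. Qed.

Lemma herm_outer n (c : 'I_n -> vec I) : herm_op (outer c).
Proof.
move=> x y; rewrite /outer rmorph_sum; apply: eq_bigr => i _.
by rewrite /proj_op rmorphM /= conjCK mulrC.
Qed.

Lemma form_outer n (c : 'I_n -> vec I) u :
  form (outer c) u u = \sum_i dotv (c i) u * (dotv (c i) u)^*.
Proof.
rewrite /form /outer.
under eq_bigr => x _ do under eq_bigr => y _ do rewrite mulr_sumr mulr_suml.
under eq_bigr => x _ do rewrite exchange_big /=.
rewrite exchange_big /=; apply: eq_bigr => i _.
rewrite mulrC /dotv rmorph_sum mulr_suml; apply: eq_bigr => x _.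
rewrite mulr_sumr; apply: eq_bigr => y _.
by rewrite /proj_op rmorphM /= conjCK; ring.
Qed.

Lemma form_kernel A z : (forall x, apply_op A z x = 0) -> form A z z = 0.
Proof.
move=> Az; rewrite /form big1 // => x _.
transitivity ((z x)^* * apply_op A z x); last by rewrite Az mulr0.
by rewrite /apply_op mulr_sumr; apply: eq_bigr => y _; rewrite mulrA.
Qed.

Lemma sum_enum_rank (F : 'I_#|I| -> algC) : \sum_i F i = \sum_y F (enum_rank y).
Proof.
by rewrite (reindex (@enum_rank I)) //; exists enum_val => y _; rewrite ?enum_rankK ?enum_valK.
Qed.

Lemma supp_op_kernel_orth A b : herm_op A ->
  (forall z, (forall x, apply_op A z x = 0) -> dotv b z = 0) -> supp_op A b.
Proof.
move=> hA b_orth.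
(* The columns of [cokermx M^T] are, up to conjugation, kernel vectors of A. *)
pose M : 'M[algC]_#|I| := \matrix_(i, j) A (enum_val i) (enum_val j).
pose bt : 'rV[algC]_#|I| := \row_j b (enum_val j).
have : (bt <= M^T)%MS.
  rewrite submxE; apply/eqP/rowP => j; rewrite !mxE.
  have MK := mulmx_coker M^T.
  pose z : vec I := fun a => (cokermx M^T (enum_rank a) j)^*.
  have Az : forall x, apply_op A z x = 0.
    move=> x; move/matrixP: MK => /(_ (enum_rank x) j); rewrite !mxE.
    move/(congr1 (@Num.conj _)); rewrite rmorph0 rmorph_sum /= => <-.
    rewrite /apply_op sum_enum_rank; apply: eq_bigr => y _.
    by rewrite /z rmorphM /= !mxE !enum_rankK (hA x y) conjCK.
  transitivity ((dotv b z)^*); last by rewrite b_orth // rmorph0.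
  rewrite /dotv rmorph_sum /= sum_enum_rank; apply: eq_bigr => y _.
  by rewrite /z !mxE enum_rankK rmorphM /= !conjCK.
move/submxP => [u Hu].
exists (fun y => u 0 (enum_rank y)); apply: functional_extensionality => x.
move/matrixP: Hu => /(_ 0 (enum_rank x)); rewrite !mxE enum_rankK => ->.
rewrite /apply_op sum_enum_rank; apply: eq_bigr => y _.
by rewrite !mxE !enum_rankK mulrC.
Qed.

Lemma supp_opZ A t v : supp_op A v -> supp_op A (fun a => t * v a).
Proof.
case=> u ->; exists (fun a => t * u a); apply: functional_extensionality => x.
by rewrite /apply_op mulr_sumr; apply: eq_bigr => y _; rewrite mulrCA.
Qed.

Lemma proj_opZ t v x y : proj_op (fun a => t * v a) x y = t * t^* * proj_op v x y.
Proof. by rewrite /proj_op rmorphM; ring. Qed.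

Lemma expect_tr_mul A v : expect_op A v = tr_mul A (proj_op v).
Proof.
by rewrite /expect_op /tr_mul; apply: eq_bigr => x _; apply: eq_bigr => y _; rewrite /proj_op; ring.
Qed.

Lemma tr_mul_proj_opZ A t v :
  tr_mul A (proj_op (fun a => t * v a)) = t * t^* * tr_mul A (proj_op v).
Proof.
rewrite /tr_mul mulr_sumr; apply: eq_bigr => x _; rewrite mulr_sumr.
by apply: eq_bigr => y _; rewrite proj_opZ mulrCA.
Qed.

Lemma trace_proj_opZ t v : trace (proj_op (fun a => t * v a)) = t * t^* * trace (proj_op v).
Proof. by rewrite /trace mulr_sumr; apply: eq_bigr => x _; rewrite proj_opZ. Qed.

Lemma tr_mulZr A t B : tr_mul A (fun x y => t * B x y) = t * tr_mul A B.
Proof.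
rewrite /tr_mul mulr_sumr; apply: eq_bigr => x _; rewrite mulr_sumr.
by apply: eq_bigr => y _; rewrite mulrCA.
Qed.

Lemma tr_mul_outer A n (c : 'I_n -> vec I) :
  tr_mul A (outer c) = \sum_i expect_op A (c i).
Proof.
under eq_bigr => i _ do rewrite expect_tr_mul.
rewrite /tr_mul [RHS]exchange_big; apply: eq_bigr => x _.
by rewrite [RHS]exchange_big; apply: eq_bigr => y _; rewrite /outer mulr_sumr.
Qed.

Lemma trace_outer n (c : 'I_n -> vec I) :
  trace (outer c) = \sum_i trace (proj_op (c i)).
Proof. exact: exchange_big. Qed.

Lemma trace_proj_op_ge0 v : 0 <= trace (proj_op v).
Proof. by apply: sumr_ge0 => x _; apply: mul_conjC_ge0. Qed.

Lemma trace_proj_op_eq0 v : trace (proj_op v) = 0 -> forall x, v x = 0.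
Proof.
move=> tr0 x; apply/eqP; rewrite -mul_conjC_eq0; apply/eqP.
exact: (psumr_eq0P (fun i _ => mul_conjC_ge0 (v i)) tr0).
Qed.

End Operators.

Section Variational.
Variables (I : finType) (A : op I) (psi : vec I) (P : vec I -> Prop).
Hypothesis PZ : forall t v, P v -> P (fun a => t * v a).
Hypothesis psi_min : forall phi, normalized_vec phi -> P phi ->
  proj_op phi <> proj_op psi -> expect_op A psi < expect_op A phi.

Lemma expect_excess_cases v : P v ->
  expect_op A psi * trace (proj_op v) < expect_op A v \/
  forall x y, proj_op v x y = trace (proj_op v) * proj_op psi x y.
Proof.
move=> Pv; have [tr0|tr_neq0] := eqVneq (trace (proj_op v)) 0.
  by right=> x y; rewrite tr0 mul0r /proj_op (trace_proj_op_eq0 tr0) mul0r.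
have tr_gt0 : 0 < trace (proj_op v) by rewrite lt_def tr_neq0 trace_proj_op_ge0.
set r := sqrtC (trace (proj_op v)).
have r_neq0 : r != 0 by rewrite gt_eqF // sqrtC_gt0.
have r_real : r^* = r by apply/CrealP; rewrite gtr0_real // sqrtC_gt0.
have rr : r * r^* = trace (proj_op v) by rewrite r_real -expr2 sqrtCK.
pose phi := fun a => r^-1 * v a.
have v_phi : (fun a => r * phi a) = v.
  by apply: functional_extensionality => a; rewrite /phi mulVKf.
have phi_normalized : normalized_vec phi.
  rewrite /normalized_vec -/(trace (proj_op phi)) /phi trace_proj_opZ -rr fmorphV /= r_real.
  by field.
have expect_v : expect_op A v = r * r^* * expect_op A phi.
  by rewrite !expect_tr_mul -v_phi tr_mul_proj_opZ.
case: (classic (proj_op phi = proj_op psi)) => [phi_psi|phi_neq_psi]; [right=> x y | left].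
  by rewrite -{1}v_phi proj_opZ rr phi_psi.
rewrite expect_v rr mulrC ltr_pM2l //.
exact: psi_min phi_normalized (PZ _ Pv) phi_neq_psi.
Qed.

Lemma outer_eq_proj_op n (c : 'I_n -> vec I) : (forall i, P (c i)) ->
  trace (outer c) = 1 -> tr_mul A (outer c) = expect_op A psi -> outer c = proj_op psi.
Proof.
move=> Pc tr1 tr_mul_c.
pose excess i := expect_op A (c i) - expect_op A psi * trace (proj_op (c i)).
have excess_ge0 i : 0 <= excess i.
  rewrite /excess subr_ge0; case: (expect_excess_cases (Pc i)) => [/ltW //|/op_ext c_psi].
  by rewrite [X in _ <= X]expect_tr_mul [in X in _ <= X]c_psi tr_mulZr -expect_tr_mul mulrC.
have excess_sum0 : \sum_i excess i = 0.
  by rewrite sumrB -mulr_sumr -tr_mul_outer -trace_outer tr1 tr_mul_c mulr1 subrr.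
have c_psi i x y : proj_op (c i) x y = trace (proj_op (c i)) * proj_op psi x y.
  case: (expect_excess_cases (Pc i)) => [|-> //].
  by rewrite -subr_gt0 -/(excess i) (psumr_eq0P (fun i _ => excess_ge0 i) excess_sum0) ?ltxx.
apply: op_ext => x y; rewrite /outer (eq_bigr _ (fun i _ => c_psi i x y)).
by rewrite -mulr_suml -trace_outer tr1 mul1r.
Qed.

End Variational.

Section PartialTrace.
Variables (N : nat) (d : 'I_N -> nat) (S : {set 'I_N}).
Implicit Types (x y : cfg d) (u : cfgS d S) (w : cfgS d (~: S)).

Definition slice (z : vec (cfg d)) w : vec (cfgS d S) := fun u => z (join u w).
Definition tens_vec (f : vec (cfgS d S)) w : vec (cfg d) :=
  fun x => if rst (~: S) x == w then f (rst S x) else 0.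

Lemma cfgS_out (T : {set 'I_N}) (u : cfgS d T) a : a \notin T -> val u a = ord0.
Proof. by move=> aT; have /forallP/(_ a)/implyP/(_ aT)/eqP := valP u. Qed.

Lemma join_rst x : join (rst S x) (rst (~: S) x) = x.
Proof. by apply/ffunP => a; rewrite /join !ffunE inE; case: (a \in S). Qed.

Lemma rst_join u w : rst S (join u w) = u.
Proof.
apply: val_inj; apply/ffunP => a; rewrite /= /rst_fun /join !ffunE.
by case: (boolP (a \in S)) => // aS; rewrite cfgS_out.
Qed.

Lemma rstC_join u w : rst (~: S) (join u w) = w.
Proof.
apply: val_inj; apply/ffunP => a; rewrite /= /rst_fun /join !ffunE inE.
by case: (boolP (a \in S)) => //= aS; rewrite cfgS_out // inE aS.
Qed.

Lemma sum_join (F : cfg d -> algC) :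
  \sum_x F x = \sum_(u : cfgS d S) \sum_(w : cfgS d (~: S)) F (join u w).
Proof.
rewrite pair_bigA (reindex (fun p : cfgS d S * cfgS d (~: S) => join p.1 p.2)) //=.
exists (fun x => (rst S x, rst (~: S) x)) => [[u w] _ | x _] /=.
  by rewrite rst_join rstC_join.
exact: join_rst.
Qed.

Lemma tensI_join (B : op (cfgS d S)) u1 w1 u2 w2 :
  tensI B (join u1 w1) (join u2 w2) = if w1 == w2 then B u1 u2 else 0.
Proof. by rewrite /tensI !rstC_join !rst_join. Qed.

Lemma tens_vec_join f u w w' : tens_vec f w (join u w') = if w' == w then f u else 0.
Proof. by rewrite /tens_vec rstC_join rst_join. Qed.

Lemma herm_ptrace (sg : op (cfg d)) : herm_op sg -> herm_op (ptrace S sg).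
Proof. by move=> hsg u v; rewrite /ptrace rmorph_sum; apply: eq_bigr => w _. Qed.

Lemma herm_tensI (B : op (cfgS d S)) : herm_op B -> herm_op (tensI B).
Proof. by move=> hB x y; rewrite /tensI eq_sym; case: ifP; rewrite ?rmorph0. Qed.

Lemma tr_mul_tensI (B : op (cfgS d S)) (sg : op (cfg d)) :
  tr_mul (tensI B) sg = tr_mul B (ptrace S sg).
Proof.
rewrite /tr_mul sum_join; apply: eq_bigr => u _.
transitivity (\sum_w1 \sum_u2 B u u2 * sg (join u2 w1) (join u w1)).
  apply: eq_bigr => w1 _; rewrite sum_join; apply: eq_bigr => u2 _.
  rewrite -(sum_if_eq w1 (fun w2 => B u u2 * sg (join u2 w2) (join u w1))).
  apply: eq_bigr => w2 _; rewrite tensI_join eq_sym.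
  by case: eqP => [->|]; rewrite ?mul0r.
by rewrite exchange_big; apply: eq_bigr => u2 _; rewrite /ptrace mulr_sumr.
Qed.

Lemma apply_tensI (B : op (cfgS d S)) z u w :
  apply_op (tensI B) z (join u w) = apply_op B (slice z w) u.
Proof.
rewrite /apply_op sum_join; apply: eq_bigr => u2 _.
rewrite -(sum_if_eq w (fun w2 => B u u2 * z (join u2 w2))).
apply: eq_bigr => w2 _; rewrite tensI_join eq_sym.
by case: eqP => [->|]; rewrite ?mul0r.
Qed.

Lemma dotv_slice (v z : vec (cfg d)) :
  dotv v z = \sum_w dotv v (tens_vec (slice z w) w).
Proof.
rewrite /dotv sum_join exchange_big; apply: eq_bigr => w _.
rewrite sum_join exchange_big /=.
rewrite -(sum_if_eq w (fun w1 => \sum_u (v (join u w1))^* * z (join u w1))).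
apply: eq_bigr => w1 _; case: eqP => [->|ne].
  by apply: eq_bigr => u _; rewrite tens_vec_join eqxx.
by rewrite big1 // => u _; rewrite tens_vec_join (introF eqP ne) mulr0.
Qed.

Lemma form_ptrace (sg : op (cfg d)) f :
  form (ptrace S sg) f f = \sum_w form sg (tens_vec f w) (tens_vec f w).
Proof.
have form_tens w : form sg (tens_vec f w) (tens_vec f w) =
    \sum_u \sum_u2 (f u)^* * sg (join u w) (join u2 w) * f u2.
  rewrite /form sum_join; apply: eq_bigr => u _.
  transitivity (\sum_w1 (if w1 == w then
                  \sum_y (f u)^* * sg (join u w1) y * tens_vec f w y else 0)).
    apply: eq_bigr => w1 _; rewrite tens_vec_join; case: eqP => _ //.
    by apply: big1 => y _; rewrite rmorph0 !mul0r.
  rewrite sum_if_eq sum_join; apply: eq_bigr => u2 _.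
  transitivity (\sum_w2 (if w2 == w then
                  (f u)^* * sg (join u w) (join u2 w2) * f u2 else 0)).
    by apply: eq_bigr => w2 _; rewrite tens_vec_join; case: eqP => _; rewrite ?mulr0.
  by rewrite sum_if_eq.
under [RHS]eq_bigr => w _ do rewrite form_tens.
rewrite exchange_big; apply: eq_bigr => u _; rewrite exchange_big; apply: eq_bigr => u2 _.
by rewrite /ptrace mulr_sumr mulr_suml.
Qed.

Lemma supp_tensI_ptrace_outer n (c : 'I_n -> vec (cfg d)) i :
  supp_op (tensI (ptrace S (outer c))) (c i).
Proof.
(* Each slice of a kernel vector z is a null vector of the marginal, hence
   tens_vec (slice z w) w is a null vector of outer c, orthogonal to all c i. *)
apply: supp_op_kernel_orth; first exact/herm_tensI/herm_ptrace/herm_outer.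
move=> z Kz; rewrite dotv_slice big1 // => w _.
set zw := tens_vec (slice z w).
have Kzw u : apply_op (ptrace S (outer c)) (slice z w) u = 0.
  by rewrite -apply_tensI Kz.
have form_ge0 w' : 0 <= form (outer c) (zw w') (zw w').
  by rewrite form_outer; apply: sumr_ge0 => j _; apply: mul_conjC_ge0.
move: (form_kernel Kzw); rewrite form_ptrace.
move=> /(psumr_eq0P (fun w' _ => form_ge0 w'))/(_ w isT); rewrite form_outer.
move=> /(psumr_eq0P (fun j _ => mul_conjC_ge0 _))/(_ i isT)/eqP.
by rewrite mul_conjC_eq0 => /eqP.
Qed.

End PartialTrace.

Lemma tr_mul_Wsum (N : nat) (d : 'I_N -> nat) (K : nat) (nb : 'I_K -> {set 'I_N})
    (Wk : forall k : 'I_K, op (cfgS d (nb k))) (sg : op (cfg d)) :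
  tr_mul (Wsum Wk) sg = \sum_k tr_mul (Wk k) (ptrace (nb k) sg).
Proof.
rewrite /tr_mul /Wsum.
under eq_bigr => x _ do under eq_bigr => y _ do rewrite mulr_suml.
under eq_bigr => x _ do rewrite exchange_big /=.
by rewrite exchange_big; apply: eq_bigr => k _; apply: tr_mul_tensI.
Qed.

Theorem mainTheorem3 (N : nat) (d : 'I_N -> nat) (K : nat)
  (nb : 'I_K -> {set 'I_N}) (psi : vec (cfg d))
  (Wk : forall k : 'I_K, op (cfgS d (nb k))) :
  normalized_vec psi ->
  nontrivial_nbhd nb ->
  herm_op (Wsum Wk) ->
  (forall phi : vec (cfg d), normalized_vec phi -> DQLS nb psi phi ->
     proj_op phi <> proj_op psi -> expect_op (Wsum Wk) psi < expect_op (Wsum Wk) phi) ->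
  UDA nb (proj_op psi).
Proof.
move=> _ _ _ psi_min sg [sg_herm [sg_psd sg_tr]] sg_marg.
have [n [c sg_c]] := psd_outer sg_herm sg_psd.
rewrite sg_c in sg_tr sg_marg *.
have DQLS_Z t v : DQLS nb psi v -> DQLS nb psi (fun a => t * v a).
  by move=> Dv k; apply: supp_opZ.
apply: (outer_eq_proj_op DQLS_Z psi_min) => // [i k|].
  by rewrite -sg_marg; apply: supp_tensI_ptrace_outer.
by rewrite expect_tr_mul !tr_mul_Wsum; apply: eq_bigr => k _; rewrite sg_marg.
Qed.
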